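(* Let $X=(X_1,\dots,X_d)$ be a random vector with values in $\{0,1\}^d$ such that $\mathbb{P}(X=x)>0$ for every $x\in\{0,1\}^d$. Let $V_\emptyset$ be the space of almost surely constant real random variables and, for nonempty $A\subseteq D:=\{1,\dots,d\}$, $V_A:=\left(\sum_{B\subsetneq A}V_B\right)^{\perp_A}$, the orthogonal complement taken inside $\mathbb{L}^2_A$. For $A\subseteq D$ let $e_A(X_A):=\dfrac{(-1)^{\sum_{j\in A}X_j}}{\mathbf{P}_A(X_A)}$, with $e_\emptyset(X_\emptyset)=1$. Then $V_A=\mathrm{span}(e_A(X_A))$ for every $A\subseteq D$; in particular $\{e_A(X_A)\}_{A\subseteq D}$ is a basis of the space of real-valued functions of $X$ which is hierarchically orthogonal (i.e. $\mathbb{E}[e_A(X_A)e_B(X_B)]=0$ whenever $B\subsetneq A$).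
   Context: For $A\subseteq D$, $X_A:=(X_i)_{i\in A}$, $\mathbf{P}_A(x_A):=\mathbb{P}(X_A=x_A)$, and $\mathbb{L}^2_A:=\{f(X_A): f:\{0,1\}^{|A|}\to\mathbb{R}\}$, a Hilbert space for the inner product $\langle U,V\rangle:=\mathbb{E}[UV]$; $F^{\perp_A}$ denotes the orthogonal complement of a subspace $F$ in $\mathbb{L}^2_A$. *)

From HB Require Import structures.
From mathcomp Require Import all_boot all_order all_algebra.
Set Implicit Arguments. Unset Strict Implicit. Unset Printing Implicit Defensive.
Import Order.TTheory GRing.Theory Num.Theory.
Local Open Scope ring_scope.

(* Outcomes of X = (X_1,...,X_d) in {0,1}^d, indices D = 'I_d, true = 1. *)
Definition outcome (d : nat) := {ffun 'I_d -> bool}.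

(* A real random variable f(X) is represented by the function f on outcomes. *)
Section Defs.
Variables (R : realFieldType) (d : nat) (p : outcome d -> R).

Definition inner (U V : outcome d -> R) : R := \sum_x p x * U x * V x.

Definition inL2 (A : {set 'I_d}) (U : outcome d -> R) : Prop :=
  forall x y : outcome d, (forall i, i \in A -> x i = y i) -> U x = U y.

Definition as_const (U : outcome d -> R) : Prop :=
  exists c : R, forall x, 0 < p x -> U x = c.

Definition PA (A : {set 'I_d}) (x : outcome d) : R :=
  \sum_(y : outcome d | [forall i in A, y i == x i]) p y.

Definition eA (A : {set 'I_d}) (x : outcome d) : R :=
  (-1) ^+ (\sum_(j in A) (x j : nat))%N / PA A x.

Definition in_sum_proper (V : {set 'I_d} -> (outcome d -> R) -> Prop)
    (A : {set 'I_d}) (g : outcome d -> R) : Prop :=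
  exists G : {set 'I_d} -> outcome d -> R,
    (forall B : {set 'I_d}, B \proper A -> V B (G B)) /\
    (forall x, g x = \sum_(B : {set 'I_d} | B \proper A) G B x).

(* Vrec n A is the definition with recursion depth n; it is only used
   with n = #|A| (proper subsets B of A have #|B| <= #|A| - 1). *)
Fixpoint Vrec (n : nat) (A : {set 'I_d}) (U : outcome d -> R) : Prop :=
  if A == set0 then as_const U else
  match n with
  | O => False
  | S n' => (inL2 A U /\
             forall g, in_sum_proper (Vrec n') A g -> inner U g = 0)
  end.

Definition V (A : {set 'I_d}) (U : outcome d -> R) : Prop := Vrec #|A| A U.
End Defs.

(* Write [chi S x = (-1) ^ (\sum_(j in S) x j)] for the Walsh characters and
   [walsh S f = \sum_x chi S x * f x] for the Walsh coefficients; [walsh S f]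
   vanishes when [f] ignores a coordinate of [S].  If [f] is a function of
   [X_A], then summing [f] against [PA p A] counts every [A]-class of outcomes
   equally often, so [walsh A f] is a positive multiple of [E[eA_A f]].  Hence
   [eA_A] is orthogonal to every function of [X_B], [B \proper A], while
   [walsh A eA_A > 0]: the family [(eA_C)] is triangular with respect to the
   Walsh basis, so it is free and [(eA_C)_(C \subset A)] spans [L^2_A].
   By induction on [A], [V_A] is then the orthogonal complement in [L^2_A] of
   [span (eA_B)_(B \proper A)], i.e. the line through [eA_A]. *)

From HB Require Import structures.
From mathcomp Require Import all_boot all_order all_algebra.
From mathcomp Require Import lra ring.
Set Implicit Arguments. Unset Strict Implicit. Unset Printing Implicit Defensive.
Import Order.TTheory GRing.Theory Num.Theory.
Local Open Scope ring_scope.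

Lemma proper_ind (T : finType) (P : {set T} -> Prop) :
  (forall A : {set T}, (forall B : {set T}, B \proper A -> P B) -> P A) ->
  forall A, P A.
Proof.
move=> IH A; elim: {A}#|A|.+1 {-2}A (ltnSn #|A|) => // n IHn A leAn.
by apply: IH => B /proper_card ltBA; apply: IHn; apply: leq_trans ltBA _.
Qed.

Section Walsh.

Variables (R : realFieldType) (d : nat).
Implicit Types (A B C S : {set 'I_d}) (x y z : outcome d) (f g U : outcome d -> R).

Definition agree A x y := [forall i in A, x i == y i].

Lemma agreeP A x y : reflect (forall i, i \in A -> x i = y i) (agree A x y).
Proof. by apply: (iffP forall_inP) => h i /h /eqP. Qed.

Lemma agree_sym A x y : agree A x y = agree A y x.
Proof. by apply: eq_forallb_in => i _; rewrite eq_sym. Qed.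

Lemma agree_refl A x : agree A x x.
Proof. exact/agreeP. Qed.

Lemma inL2_subset A B f : A \subset B -> inL2 A f -> inL2 B f.
Proof. by move=> /subsetP AB hf x y h; apply: hf => i /AB /h. Qed.

Lemma inL2_map2 A (h : R -> R -> R) f g :
  inL2 A f -> inL2 A g -> inL2 A (fun x => h (f x) (g x)).
Proof. by move=> hf hg x y xy; rewrite (hf x y xy) (hg x y xy). Qed.

Definition chi A x : R := (-1) ^+ (\sum_(j in A) x j).

Definition walsh A f : R := \sum_x chi A x * f x.

Definition flip (j : 'I_d) x : outcome d :=
  [ffun i => if i == j then ~~ x i else x i].

Lemma flipK j : involutive (flip j).
Proof. by move=> x; apply/ffunP=> i; rewrite !ffunE; case: eqP => // _; rewrite negbK. Qed.

Lemma chi_flip A j x : j \in A -> chi A (flip j x) = - chi A x.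
Proof.
move=> jA; rewrite /chi (bigD1 j jA) [in RHS](bigD1 j jA) /= !exprD ffunE eqxx.
rewrite (eq_bigr (fun i => (x i : nat))); last first.
  by move=> i /andP[_ /negbTE ij]; rewrite ffunE ij.
by case: (x j); rewrite /= ?expr1 ?expr0 ?mulN1r ?mul1r ?opprK.
Qed.

Lemma chi_sqr A x : chi A x * chi A x = 1.
Proof. by rewrite /chi -expr2 sqrr_sign. Qed.

Lemma inL2_chi A : inL2 A (chi A).
Proof. by move=> x y h; rewrite /chi; congr (_ ^+ _); apply: eq_bigr => i /h ->. Qed.

(* Flipping a coordinate in [A :\: B] fixes [f] and negates [chi A]. *)
Lemma walsh_inL2_eq0 A B f : inL2 B f -> ~~ (A \subset B) -> walsh A f = 0.
Proof.
move=> hf /subsetPn[j jA jB].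
have f_flip x : f (flip j x) = f x.
  by apply: hf => i iB; rewrite ffunE; case: eqP => // ij; rewrite -ij iB in jB.
have : walsh A f = - walsh A f.
  rewrite /walsh [LHS](reindex_inj (inv_inj (@flipK j))) /= -sumrN.
  by apply: eq_bigr => x _; rewrite f_flip chi_flip // mulNr.
lra.
Qed.

Lemma walshB A f g : walsh A (fun x => f x - g x) = walsh A f - walsh A g.
Proof. by rewrite /walsh -sumrB; apply: eq_bigr => x _; rewrite mulrBr. Qed.

Lemma walshZ A a f : walsh A (fun x => a * f x) = a * walsh A f.
Proof. by rewrite /walsh mulr_sumr; apply: eq_bigr => x _; rewrite mulrCA. Qed.

Lemma walsh_sum A (I : Type) (r : seq I) (P : pred I) (F : I -> outcome d -> R) :
  walsh A (fun x => \sum_(i <- r | P i) F i x) = \sum_(i <- r | P i) walsh A (F i).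
Proof. by rewrite /walsh exchange_big; apply: eq_bigr => x _; rewrite mulr_sumr. Qed.

(* [\sum_S \prod_(i in S) e i = \prod_i (e i + 1)], and [e i + 1] is [2] or [0]. *)
Lemma sum_chi_mul x y :
  \sum_S chi S x * chi S y = (x == y)%:R * 2 ^+ d.
Proof.
pose e i : R := (-1) ^+ (x i : nat) * (-1) ^+ (y i : nat).
transitivity (\prod_i (e i + 1)).
  rewrite [RHS]bigA_distr; apply: eq_big => // S _.
  rewrite /chi !expr_sum -big_split [LHS]big_mkcond /=.
  by apply: eq_bigr => i _; case: (i \in S).
case: eqP => [exy|/eqP xy].
  rewrite mul1r (eq_bigr (fun _ => 2)) ?prodr_const ?card_ord // => i _.
  by rewrite /e exy -expr2 sqrr_sign.
have [i xyi] : exists i, x i != y i.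
  apply/existsP; apply: contraNT xy => /existsPn h.
  by apply/eqP/ffunP => i; apply/eqP/negPn/h.
rewrite mul0r (bigD1 i) //= /e; move: xyi.
by case: (x i); case: (y i); rewrite //= expr1 expr0 ?mulN1r ?mulr1 ?mul1r ?addNr mul0r.
Qed.

Lemma walsh_inversion U x : U x = \sum_S walsh S U / 2 ^+ d * chi S x.
Proof.
have d2 : (2 ^+ d : R) != 0 by rewrite expf_eq0 pnatr_eq0 andbF.
transitivity (\sum_y U y * (\sum_S chi S x * chi S y) / 2 ^+ d).
  rewrite (bigD1 x) //= sum_chi_mul eqxx mul1r mulfK // big1 ?addr0 // => y yx.
  by rewrite sum_chi_mul eq_sym (negbTE yx) mul0r mulr0 mul0r.
under eq_bigr => y _ do rewrite mulr_sumr mulr_suml.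
rewrite exchange_big; apply: eq_bigr => S _.
by rewrite /walsh !mulr_suml; apply: eq_bigr => y _; ring.
Qed.

Lemma walsh_inversion_inL2 A U x : inL2 A U ->
  U x = \sum_(S : {set 'I_d} | S \subset A) walsh S U / 2 ^+ d * chi S x.
Proof.
move=> hU; rewrite walsh_inversion [RHS]big_mkcond; apply: eq_bigr => S _.
by case: ifPn => // /(walsh_inL2_eq0 hU) ->; rewrite !mul0r.
Qed.

(* The common size, [2 ^ (d - #|A|)], of the classes of outcomes agreeing
   on [A]. *)
Definition nagree A : nat := #|[set x | agree A x [ffun => false]]|.

Lemma nagree_gt0 A : (0 < nagree A)%N.
Proof. by apply/card_gt0P; exists [ffun => false]; rewrite inE agree_refl. Qed.

Lemma card_agree A y : #|[set x | agree A x y]| = nagree A.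
Proof.
pose h x : outcome d := [ffun i => x i (+) y i].
have hK : involutive h.
  by move=> x; apply/ffunP => i; rewrite !ffunE; case: (x i); case: (y i).
rewrite /nagree -(card_preimset _ (inv_inj hK)); apply: eq_card => x.
rewrite !inE; apply: eq_forallb_in => i _; rewrite !ffunE.
by case: (x i); case: (y i).
Qed.

Variable p : outcome d -> R.

Lemma inL2_PA A : inL2 A (PA p A).
Proof.
by move=> x y h; apply: eq_bigl => z; apply: eq_forallb_in => i /h ->.
Qed.

Lemma eAE A x : eA p A x = chi A x / PA p A x.
Proof. by []. Qed.

Lemma inL2_eA A : inL2 A (eA p A).
Proof. exact: (inL2_map2 (fun a b => a / b) (@inL2_chi A) (@inL2_PA A)). Qed.

(* Tower property: [PA p A x] is the mass of the [A]-class of [x], and all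
   [A]-classes have [nagree A] elements. *)
Lemma sum_PA_mul A g : inL2 A g ->
  \sum_x PA p A x * g x = (nagree A)%:R * \sum_x p x * g x.
Proof.
move=> hg; rewrite /PA; under eq_bigr do rewrite mulr_suml.
rewrite (exchange_big_dep predT) //= mulr_sumr; apply: eq_bigr => z _.
transitivity (\sum_(x in [set x | agree A x z]) p z * g z).
  apply: eq_big => x; first by rewrite inE agree_sym.
  by move=> /agreeP h; rewrite (hg x z) // => i /h ->.
by rewrite sumr_const card_agree mulr_natl.
Qed.

Hypothesis p_pos : forall x, 0 < p x.

Lemma PA_gt0 A x : 0 < PA p A x.
Proof.
rewrite /PA (bigD1 x) /=; last by apply/forall_inP => i _.
by apply: ltr_wpDr; [apply: sumr_ge0 => y _; apply/ltW | ].
Qed.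

Lemma walsh_inner A f : inL2 A f ->
  walsh A f = (nagree A)%:R * inner p (eA p A) f.
Proof.
move=> hf; pose g x := chi A x * f x / PA p A x.
have g_inL2 : inL2 A g.
  have chif := inL2_map2 *%R (@inL2_chi A) hf.
  exact: (inL2_map2 (fun a b => a / b) chif (@inL2_PA A)).
transitivity (\sum_x PA p A x * g x).
  by apply: eq_bigr => x _; rewrite /g [RHS]mulrC divfK // gt_eqF // PA_gt0.
rewrite (sum_PA_mul g_inL2); congr (_ * _); apply: eq_bigr => x _.
by rewrite /g eAE; ring.
Qed.

Lemma eA_orthogonal A B : B \proper A -> inner p (eA p A) (eA p B) = 0.
Proof.
rewrite properE => /andP[BA nAB].
have /eqP := walsh_inner (inL2_subset BA (@inL2_eA B)).
rewrite (walsh_inL2_eq0 (@inL2_eA B) nAB).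
by rewrite eq_sym mulf_eq0 pnatr_eq0 eqn0Ngt nagree_gt0 => /eqP.
Qed.

Lemma walsh_eA_gt0 A : 0 < walsh A (eA p A).
Proof.
have term_gt0 x : 0 < chi A x * eA p A x.
  by rewrite eAE mulrA chi_sqr mul1r invr_gt0 PA_gt0.
rewrite /walsh (bigD1 [ffun => false]) //=; apply: ltr_wpDr => //.
by apply: sumr_ge0 => x _; apply/ltW.
Qed.

Lemma inner_eA_neq0 A : inner p (eA p A) (eA p A) != 0.
Proof.
apply: contraTneq (walsh_eA_gt0 A) => eA0.
by rewrite (walsh_inner (@inL2_eA A)) eA0 mulr0 ltxx.
Qed.

Lemma eq_innerr f g h : g =1 h -> inner p f g = inner p f h.
Proof. by move=> gh; apply: eq_bigr => x _; rewrite gh. Qed.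

Lemma innerC f g : inner p f g = inner p g f.
Proof. by apply: eq_bigr => x _; rewrite mulrAC. Qed.

Lemma innerBr f g h : inner p f (fun x => g x - h x) = inner p f g - inner p f h.
Proof. by rewrite /inner -sumrB; apply: eq_bigr => x _; rewrite mulrBr. Qed.

Lemma innerZr f a g : inner p f (fun x => a * g x) = a * inner p f g.
Proof. by rewrite /inner mulr_sumr; apply: eq_bigr => x _; rewrite mulrCA. Qed.

Lemma inner_sumr f (I : Type) (r : seq I) (P : pred I) (F : I -> outcome d -> R) :
  inner p f (fun x => \sum_(i <- r | P i) F i x) = \sum_(i <- r | P i) inner p f (F i).
Proof. by rewrite /inner exchange_big; apply: eq_bigr => x _; rewrite mulr_sumr. Qed.

Lemma inner_self_eq0 f : inner p f f = 0 -> forall x, f x = 0.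
Proof.
move=> ff0 x; have term_ge0 y : 0 <= p y * f y * f y.
  by rewrite -mulrA mulr_ge0 ?(ltW (p_pos y)) // -expr2 sqr_ge0.
have /(_ x isT)/eqP := psumr_eq0P (fun y _ => term_ge0 y) ff0.
by rewrite -mulrA mulf_eq0 gt_eqF //= mulf_eq0 orbb => /eqP.
Qed.

Definition in_span A f := exists c : {set 'I_d} -> R,
  forall x, f x = \sum_(C : {set 'I_d} | C \subset A) c C * eA p C x.

Lemma eq_in_span A f g : f =1 g -> in_span A f -> in_span A g.
Proof. by move=> fg [c hc]; exists c => x; rewrite -fg. Qed.

Lemma in_spanD A f g : in_span A f -> in_span A g -> in_span A (fun x => f x + g x).
Proof.
move=> [a ha] [b hb]; exists (fun C => a C + b C) => x.
by rewrite ha hb -big_split; apply: eq_bigr => C _; rewrite mulrDl.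
Qed.

Lemma in_spanZ A a f : in_span A f -> in_span A (fun x => a * f x).
Proof.
move=> [b hb]; exists (fun C => a * b C) => x.
by rewrite hb mulr_sumr; apply: eq_bigr => C _; rewrite mulrA.
Qed.

Lemma in_span_sum A (I : Type) (r : seq I) (P : pred I) (F : I -> outcome d -> R) :
  (forall i, P i -> in_span A (F i)) -> in_span A (fun x => \sum_(i <- r | P i) F i x).
Proof.
move=> hF; elim: r => [|i r IH].
  by exists (fun _ => 0) => x; rewrite big_nil big1 // => C _; rewrite mul0r.
have [Pi | nPi] := boolP (P i).
  by apply: eq_in_span (in_spanD (hF i Pi) IH) => x; rewrite big_cons Pi.
by apply: eq_in_span IH => x; rewrite big_cons (negbTE nPi).
Qed.

Lemma in_span_eA A : in_span A (eA p A).
Proof.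
exists (fun C => if C == A then 1 else 0) => x.
rewrite (bigD1 A) //= eqxx mul1r big1 ?addr0 // => C /andP[_ /negbTE ->].
by rewrite mul0r.
Qed.

Lemma in_span_subset A B f : B \subset A -> in_span B f -> in_span A f.
Proof.
move=> BA [b hb]; exists (fun C => if C \subset B then b C else 0) => x.
rewrite hb [RHS]big_mkcond [LHS]big_mkcond; apply: eq_bigr => C _.
have [CB | _] := boolP (C \subset B); first by rewrite (subset_trans CB BA).
by case: ifP => // _; rewrite mul0r.
Qed.

(* Subtracting the right multiple of [eA p A] kills the top Walsh coefficient;
   the rest of the expansion lives on proper subsets of [A]. *)
Lemma inL2_in_span A U : inL2 A U -> in_span A U.
Proof.
elim/proper_ind: A U => A IH U hU.
pose c := walsh A U / walsh A (eA p A).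
pose f x := U x - c * eA p A x.
have f_inL2 : inL2 A f by exact: (inL2_map2 (fun a b => a - c * b) hU (@inL2_eA A)).
have walsh_f : walsh A f = 0.
  by rewrite walshB walshZ divfK ?subrr // gt_eqF // walsh_eA_gt0.
have f_expand x : f x = \sum_(S : {set 'I_d} | S \proper A) walsh S f / 2 ^+ d * chi S x.
  rewrite (walsh_inversion_inL2 x f_inL2) (bigD1 A) //= walsh_f !mul0r add0r.
  by apply: eq_bigl => S; rewrite properEneq andbC.
have f_span : in_span A f.
  apply: eq_in_span (fun x => esym (f_expand x)) _.
  apply: in_span_sum => S SA; apply: in_spanZ; apply: in_span_subset (proper_sub SA) _.
  exact: IH SA _ (@inL2_chi S).
apply: eq_in_span (in_spanD f_span (in_spanZ c (in_span_eA A))) => x.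
by rewrite /f subrK.
Qed.

Lemma in_span_orthogonal_eq0 A f : in_span A f ->
  (forall C, C \subset A -> inner p f (eA p C) = 0) -> forall x, f x = 0.
Proof.
move=> [a ha] f_orth; apply: inner_self_eq0.
rewrite (eq_innerr f ha) inner_sumr big1 // => C CA.
by rewrite innerZr f_orth // mulr0.
Qed.

(* Triangularity: [walsh M (eA p C)] vanishes unless [M \subset C]; test a
   vanishing combination against a nonzero coefficient of maximal support. *)
Lemma eA_free (c : {set 'I_d} -> R) :
  (forall x, \sum_A c A * eA p A x = 0) -> forall A, c A = 0.
Proof.
move=> hc A; apply/eqP; apply: contraT => cA.
have [M cM maxM] := @arg_maxnP _ A (fun B => c B != 0) (fun B => #|B|) cA.
have : walsh M (fun x => \sum_B c B * eA p B x) = c M * walsh M (eA p M).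
  rewrite walsh_sum (bigD1 M) //= walshZ big1 ?addr0 // => B BM; rewrite walshZ.
  have [MB | nMB] := boolP (M \subset B); last first.
    by rewrite (walsh_inL2_eq0 (@inL2_eA B) nMB) mulr0.
  suff /eqP -> : c B == 0 by rewrite mul0r.
  apply: contraT => cB; have := maxM B cB.
  by rewrite /= leqNgt proper_card // properEneq eq_sym BM.
have -> : walsh M (fun x => \sum_B c B * eA p B x) = 0.
  by rewrite /walsh big1 // => x _; rewrite hc mulr0.
by move/esym/eqP; rewrite mulf_eq0 (negbTE cM) gt_eqF ?walsh_eA_gt0.
Qed.

End Walsh.

Section Hierarchy.

Variables (R : realFieldType) (d : nat) (p : outcome d -> R).
Hypotheses (p_pos : forall x, 0 < p x) (p_sum : \sum_x p x = 1).
Implicit Types (A B C : {set 'I_d}) (x : outcome d) (g U : outcome d -> R).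

Lemma in_sum_proper_iff (W W' : {set 'I_d} -> (outcome d -> R) -> Prop) A g :
  (forall B U, B \proper A -> W B U <-> W' B U) ->
  in_sum_proper W A g <-> in_sum_proper W' A g.
Proof.
by move=> WW'; split=> -[G [hG hg]]; exists G; split=> // B BA; apply/(WW' B _ BA)/hG.
Qed.

Lemma in_sum_proper1 (W : {set 'I_d} -> (outcome d -> R) -> Prop) A B g :
  B \proper A -> (forall C, C \proper A -> W C (fun _ => 0)) -> W B g ->
  in_sum_proper W A g.
Proof.
move=> BA W0 Wg; exists (fun C => if C == B then g else fun _ => 0); split.
  by move=> C CA; case: eqP => [-> | _]; [apply: Wg | apply: W0].
by move=> x; rewrite (bigD1 B) //= eqxx big1 ?addr0 // => C /andP[_ /negbTE ->].
Qed.

Lemma Vrec_depth n m A U : (#|A| <= n)%N -> (#|A| <= m)%N ->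
  Vrec p n A U <-> Vrec p m A U.
Proof.
elim: n m A U => [|n IH] [|m] A U hn hm /=; case: (A =P set0) => // /eqP;
  rewrite -card_gt0 => A_gt0; try by move: hn; rewrite leqNgt A_gt0.
  by move: hm; rewrite leqNgt A_gt0.
have key g : in_sum_proper (Vrec p n) A g <-> in_sum_proper (Vrec p m) A g.
  by apply: in_sum_proper_iff => B W /proper_card BA; apply: IH;
    rewrite -ltnS (leq_trans BA).
by split=> -[hU horth]; split=> // g /key; apply: horth.
Qed.

Lemma V_nonempty A U : A != set0 ->
  V p A U <-> inL2 A U /\ forall g, in_sum_proper (V p) A g -> inner p U g = 0.
Proof.
move=> A0; have [k cardA] : exists k, #|A| = k.+1.
  by exists #|A|.-1; rewrite prednK // card_gt0.
rewrite {1}/V cardA /= (negbTE A0).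
have key g : in_sum_proper (Vrec p k) A g <-> in_sum_proper (V p) A g.
  apply: in_sum_proper_iff => B W /proper_card BA; apply: Vrec_depth => //.
  by rewrite -ltnS -cardA.
by split=> -[hU horth]; split=> // g /key; apply: horth.
Qed.

Lemma eA_set0 x : eA p set0 x = 1.
Proof.
rewrite eAE /chi big_set0 expr0 /PA (eq_bigl predT) ?p_sum ?divr1 // => y.
by apply/forall_inP => i; rewrite in_set0.
Qed.

Lemma V_set0 U : V p set0 U <-> exists c, forall x, U x = c * eA p set0 x.
Proof.
rewrite /V cards0 /= eqxx.
split=> -[c hc]; exists c => x; rewrite ?eA_set0 ?mulr1; first exact: hc.
by move=> _; rewrite hc eA_set0 mulr1.
Qed.

Lemma V_eA A U : V p A U <-> exists c, forall x, U x = c * eA p A x.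
Proof.
elim/proper_ind: A U => A IH U.
have [-> | A0] := eqVneq A set0; first exact: V_set0.
rewrite V_nonempty //; split.
- move=> [hU U_orth].
  have U_orth_eA B : B \proper A -> inner p U (eA p B) = 0.
    move=> BA; apply/U_orth/(in_sum_proper1 BA) => [C CA|]; apply/IH => //.
      by exists 0 => x; rewrite mul0r.
    by exists 1 => x; rewrite mul1r.
  (* [U - c * eA p A] is a function of [X_A], hence in the span of the
     [eA p C] with [C \subset A], and is orthogonal to each of them. *)
  pose c := inner p (eA p A) U / inner p (eA p A) (eA p A).
  pose f x := U x - c * eA p A x.
  have f_inL2 : inL2 A f.
    exact: (inL2_map2 (fun a b => a - c * b) hU (@inL2_eA _ _ p A)).
  have f_orth C : C \subset A -> inner p f (eA p C) = 0.
    move=> CA; rewrite innerC innerBr innerZr.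
    have [-> | CneA] := eqVneq C A; first by rewrite divfK ?subrr ?inner_eA_neq0.
    have CA' : C \proper A by rewrite properEneq CneA.
    by rewrite innerC U_orth_eA // innerC eA_orthogonal // mulr0 subr0.
  have f0 := in_span_orthogonal_eq0 p_pos (inL2_in_span p_pos f_inL2) f_orth.
  by exists c => x; apply/eqP; rewrite -subr_eq0; apply/eqP/f0.
- move=> [c hc]; split; first by move=> x y h; rewrite !hc (inL2_eA p h).
  move=> g [G [hG hg]]; rewrite (eq_innerr p U hg) inner_sumr big1 // => B BA.
  have [b hb] := (IH B BA (G B)).1 (hG B BA).
  rewrite (eq_innerr p U hb) innerZr innerC (eq_innerr p _ hc) innerZr innerC.
  by rewrite eA_orthogonal // !mulr0.
Qed.

End Hierarchy.

Unset Implicit Arguments. Set Strict Implicit. Set Printing Implicit Defensive.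

Theorem proposition4 (R : realFieldType) (d : nat) (p : outcome d -> R)
  (p_pos : forall x, 0 < p x) (p_sum : \sum_x p x = 1)
:
  (forall (A : {set 'I_d}) (U : outcome d -> R),
     V p A U <-> exists c : R, forall x, U x = c * eA p A x)
  /\ (forall A B : {set 'I_d}, B \proper A ->
        inner p (eA p A) (eA p B) = 0)
  /\ (forall U : outcome d -> R, exists c : {set 'I_d} -> R,
        forall x, U x = \sum_(A : {set 'I_d}) c A * eA p A x)
  /\ (forall c : {set 'I_d} -> R,
        (forall x, \sum_(A : {set 'I_d}) c A * eA p A x = 0) ->
        forall A, c A = 0).
Proof.
split; first exact: V_eA.
split; first by move=> A B; apply: eA_orthogonal.
split; last exact: eA_free.
move=> U; have U_inL2 : inL2 [set: 'I_d] U.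
  by move=> x y h; congr U; apply/ffunP => i; apply: h; rewrite inE.
have [c hc] := inL2_in_span p_pos U_inL2; exists c => x.
by rewrite hc; apply: eq_bigl => C; rewrite subsetT.
Qed.
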